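(* Let $F$ be a field of characteristic zero, $G$ a finite group, $A$ a $G$-graded PI-algebra (GPI-algebra) over $F$, and $d_1,\dots,d_m$ positive integers; put $d=d_1+\cdots+d_m$. Let $\mathcal{U}(d_1,\dots,d_m;A)$ be the subalgebra of $UT(d_1,\dots,d_m;\mathcal{U}_G(A))$ generated by the generic matrices $\xi_k^{(g)}$, $k\in\mathbb{N}$, $g\in G$, defined as follows: for $1\le r\le s\le m$ and indices $i,j$ with $d_1+\cdots+d_{r-1}+1\le i\le d_1+\cdots+d_r$ and $d_1+\cdots+d_{s-1}+1\le j\le d_1+\cdots+d_s$, the $(i,j)$ entry of $\xi_k^{(g)}$ is $x_{ij,k}^{(g)}+T_G(A)\in\mathcal{U}_G(A)$, where the $x_{ij,k}^{(g)}$ are pairwise distinct free generators of degree $g$; all entries below the diagonal blocks are $0$. Then the graded homomorphism $F\langle X\rangle\to\mathcal{U}(d_1,\dots,d_m;A)$ sending $x_k^{(g)}\mapsto\xi_k^{(g)}$ is surjective with kernel $T_G(UT(d_1,\dots,d_m;A))$; in particular \[\mathcal{U}(d_1,\dots,d_m;A)\cong \frac{F\langle X\rangle}{T_G(UT(d_1,\dots,d_m;A))}.\]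
   Context: All algebras are associative and unitary. $X=\bigcup_{g\in G}X^g$ is a disjoint union of countable sets, $X^g=\{x_1^{(g)},x_2^{(g)},\dots\}$ consisting of variables of degree $g$, and $F\langle X\rangle$ is the free associative algebra on $X$, $G$-graded by declaring a monomial $x_{i_1}\cdots x_{i_k}$ to have degree $\deg(x_{i_1})\cdots\deg(x_{i_k})$. For a $G$-graded algebra $A=\bigoplus_g A^g$, a graded polynomial $f(x_1,\dots,x_t)$ is a graded identity of $A$ if $f(a_1,\dots,a_t)=0$ whenever $a_i\in A^{\deg(x_i)}$; $T_G(A)$ is the ideal of all graded identities, and $\mathcal{U}_G(A)=F\langle X\rangle/T_G(A)$ is the relatively free $G$-graded algebra of $A$ (here taken over a sufficiently large set of graded variables, including the $x_{ij,k}^{(g)}$). A GPI-algebra is a $G$-graded algebra with a nonzero graded identity. $UT(d_1,\dots,d_m;A)$ denotes the algebra of block upper-triangular matrices in $M_{d}(A)$ whose $(r,s)$ block ($r\le s$) is an arbitrary $d_r\times d_s$ matrix over $A$ and whose blocks below the diagonal are zero; it is $G$-graded by letting its degree-$g$ component consist of the matrices all of whose entries lie in $A^g$. *)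

From HB Require Import structures.
From mathcomp Require Import all_boot all_order all_algebra all_fingroup.
From mathcomp Require Import generic_quotient finmap.
From mathcomp.multinomials Require Import monalg.
From Stdlib Require Import ClassicalEpsilon.

Set Implicit Arguments.
Unset Strict Implicit.
Unset Printing Implicit Defensive.

Import GRing.Theory.
Local Open Scope ring_scope.

(* The free associative unitary algebra F<V> on a set V of variables:  *)
(* the monoid algebra of the free monoid {fmonom V} (words over V).    *)
Definition FreeAlg (F : fieldType) (V : choiceType) := {malg F[{fmonom V}]}.

Definition pvar (F : fieldType) (V : choiceType) (v : V) : FreeAlg F V :=
  << fmu v >>.

(* Evaluation of f in F<V> in a ring S, the scalars of F acting through s
   (s c = c * 1 for an F-algebra S), the variables through phi.          *)
Definition evalp (F : fieldType) (V : choiceType) (S : pzRingType)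
    (s : F -> S) (phi : V -> S) (f : FreeAlg F V) : S :=
  \sum_(m <- msupp f) s (f@_m) * \prod_(v <- (m : seq V)) phi v.

Definition graded_identity (F : fieldType) (V : choiceType) (G : finGroupType)
    (deg : V -> G) (S : pzRingType) (s : F -> S) (Sg : G -> S -> Prop)
    (f : FreeAlg F V) : Prop :=
  forall phi : V -> S, (forall v, Sg (deg v) (phi v)) -> evalp s phi f = 0.

Definition is_Ggrading (F : fieldType) (G : finGroupType) (A : algType F)
    (Ag : G -> A -> Prop) : Prop :=
  [/\ forall g, [/\ Ag g 0, (forall a b, Ag g a -> Ag g b -> Ag g (a + b))
                  & (forall (c : F) a, Ag g a -> Ag g (c *: a))],
      forall a : A, exists a_ : G -> A, (forall g, Ag g (a_ g)) /\ a = \sum_(g : G) a_ g,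
      forall a_ : G -> A, (forall g, Ag g (a_ g)) -> \sum_(g : G) a_ g = 0 ->
        forall g, a_ g = 0
    & forall (g h : G) (a b : A), Ag g a -> Ag h b -> Ag (g * h)%g (a * b)].

(* The standard graded variables x_k^(g) of F<X>, X = G x N, deg = first component *)
Definition Xvar (G : finGroupType) := (G * nat)%type.
(* The variables x_{ij,k}^(g) used for the relatively free algebra U_G(A) *)
Definition XUvar (G : finGroupType) := (G * (nat * nat * nat))%type.

Definition TG (F : fieldType) (G : finGroupType) (A : algType F)
    (Ag : G -> A -> Prop) (V : choiceType) (deg : V -> G) (f : FreeAlg F V) :=
  graded_identity deg (GRing.in_alg A) Ag f.

Definition is_GPI (F : fieldType) (G : finGroupType) (A : algType F)
    (Ag : G -> A -> Prop) : Prop :=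
  exists f : FreeAlg F (Xvar G), f != 0 /\ TG Ag (@fst G nat) f.

(* Block structure: ds = [:: d_1; ...; d_m], d = sumn ds; the (0-based)
   row/column index i lies in block number blk ds i (0-based).          *)
Definition blk (ds : seq nat) (i : nat) : nat :=
  count (fun r => sumn (take r.+1 ds) <= i)%N (iota 0 (size ds)).

Definition is_blockUT (ds : seq nat) (R : pzRingType) (M : 'M[R]_(sumn ds)) : Prop :=
  forall i j : 'I_(sumn ds), (blk ds j < blk ds i)%N -> M i j = 0.

Definition UTg (F : fieldType) (G : finGroupType) (A : algType F)
    (Ag : G -> A -> Prop) (ds : seq nat) (g : G) (M : 'M[A]_(sumn ds)) : Prop :=
  is_blockUT M /\ forall i j, Ag g (M i j).

(* T_G(UT(d_1,...,d_m;A)) (UT is a subalgebra of M_d(A), so evaluations are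
   computed in M_d(A), the scalars acting as scalar matrices). *)
Definition TG_UT (F : fieldType) (G : finGroupType) (A : algType F)
    (Ag : G -> A -> Prop) (ds : seq nat) (f : FreeAlg F (Xvar G)) : Prop :=
  graded_identity (@fst G nat) (fun c : F => (c%:A : A)%:M) (@UTg F G A Ag ds) f.

Definition pbool (P : Prop) : bool :=
  if excluded_middle_informative P then true else false.

Lemma pboolP (P : Prop) : reflect P (pbool P).
Proof. by rewrite /pbool; case: excluded_middle_informative => h; constructor. Qed.

Section ProdMorph.
Variables (V : choiceType) (S : nzRingType) (phi : V -> S).
Definition prodv (m : fmonom V) : S := \prod_(v <- (m : seq V)) phi v.
Lemma prodv_mmorph : mmorphism prodv.
Proof.
split; last by rewrite /prodv fm1 big_nil.
by move=> x y; rewrite /prodv fmM big_cat.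
Qed.
HB.instance Definition _ := isMultiplicative.Build (fmonom V) S prodv prodv_mmorph.
End ProdMorph.

Section TGIdeal.
Variables (F : fieldType) (G : finGroupType) (A : algType F)
  (Ag : G -> A -> Prop) (V : choiceType) (deg : V -> G).

Local Notation R := (FreeAlg F V).

Lemma evalpE (phi : V -> A) (f : R) :
  evalp (GRing.in_alg A) phi f = mmap (GRing.in_alg A) (prodv phi) f.
Proof. by []. Qed.

Lemma evalpM (phi : V -> A) (f g : R) :
  evalp (GRing.in_alg A) phi (f * g) =
  evalp (GRing.in_alg A) phi f * evalp (GRing.in_alg A) phi g.
Proof.
rewrite !evalpE.
have := @commr_mmap_is_multiplicative _ _ _ (GRing.in_alg A) (prodv phi).
case=> [g0 m m'|-> _] //; exact: comm_alg.
Qed.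

Lemma evalpB (phi : V -> A) (f g : R) :
  evalp (GRing.in_alg A) phi (f - g) =
  evalp (GRing.in_alg A) phi f - evalp (GRing.in_alg A) phi g.
Proof. by rewrite !evalpE mmapB. Qed.

Lemma evalp0 (phi : V -> A) : evalp (GRing.in_alg A) phi 0 = 0.
Proof. by rewrite !evalpE mmap0. Qed.

Definition TGb : {pred R} := fun f => pbool (TG Ag deg f).

Lemma TGb_zmod : zmod_closed TGb.
Proof.
split; first by apply/pboolP => phi _; rewrite evalp0.
move=> f g /pboolP hf /pboolP hg; apply/pboolP => phi hphi.
by rewrite evalpB hf // hg // subr0.
Qed.

HB.instance Definition _ := GRing.isZmodClosed.Build R TGb TGb_zmod.

Lemma TGbMl (a f : R) : f \in TGb -> a * f \in TGb.
Proof.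
move=> /pboolP hf; apply/pboolP => phi hphi.
by rewrite evalpM hf // mulr0.
Qed.

Lemma TGbMr (a f : R) : f \in TGb -> f * a \in TGb.
Proof.
move=> /pboolP hf; apply/pboolP => phi hphi.
by rewrite evalpM hf // mul0r.
Qed.

Definition UG := Quotient.quot TGb.
HB.instance Definition _ := Choice.on UG.
HB.instance Definition _ := GRing.Zmodule.on UG.

Local Open Scope quotient_scope.

Definition UG_one : UG := lift_cst UG 1.
Definition UG_mul := lift_op2 UG *%R.

Lemma pi_UG_one : \pi_UG 1 = UG_one.
Proof. by unlock UG_one. Qed.

Lemma pi_UG_mul : {morph \pi_UG : x y / x * y >-> UG_mul x y}.
Proof.
move=> x y; unlock UG_mul; apply/eqP; rewrite piE Quotient.equivE.
have hx : x - repr (\pi_UG x) \in TGb by rewrite Quotient.idealrBE reprK.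
have hy : y - repr (\pi_UG y) \in TGb by rewrite Quotient.idealrBE reprK.
move: (repr (\pi_UG x)) (repr (\pi_UG y)) hx hy => x' y' hx hy.
have -> : x * y - x' * y' = x * (y - y') + (x - x') * y'.
  by rewrite mulrBr mulrBl addrA subrK.
by apply: rpredD; [apply: TGbMl | apply: TGbMr].
Qed.

Lemma UG_mulA : associative UG_mul.
Proof.
by move=> x y z; rewrite -[x]reprK -[y]reprK -[z]reprK -!pi_UG_mul mulrA.
Qed.
Lemma UG_mul1q : left_id UG_one UG_mul.
Proof. by move=> x; rewrite -[x]reprK -pi_UG_one -pi_UG_mul mul1r. Qed.
Lemma UG_mulq1 : right_id UG_one UG_mul.
Proof. by move=> x; rewrite -[x]reprK -pi_UG_one -pi_UG_mul mulr1. Qed.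
Lemma UG_mulDl : left_distributive UG_mul +%R.
Proof.
move=> x y z; rewrite -[x]reprK -[y]reprK -[z]reprK.
by rewrite -!pi_addr -!pi_UG_mul mulrDl pi_addr.
Qed.
Lemma UG_mulDr : right_distributive UG_mul +%R.
Proof.
move=> x y z; rewrite -[x]reprK -[y]reprK -[z]reprK.
by rewrite -!pi_addr -!pi_UG_mul mulrDr pi_addr.
Qed.

HB.instance Definition _ := GRing.Zmodule_isPzRing.Build UG
  UG_mulA UG_mul1q UG_mulq1 UG_mulDl UG_mulDr.

Definition piUG (f : R) : UG := \pi_UG f.

End TGIdeal.

Section Generic.
Variables (F : fieldType) (G : finGroupType) (A : algType F)
  (Ag : G -> A -> Prop) (ds : seq nat).
Local Notation d := (sumn ds).

Definition UGA : pzRingType := UG Ag (@fst G (nat * nat * nat)).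

Definition piU (f : FreeAlg F (XUvar G)) : UGA := piUG Ag (@fst G _) f.

Definition xU (g : G) (i j k : nat) : FreeAlg F (XUvar G) :=
  pvar F ((g, (i, j, k)) : XUvar G).

Definition xi (g : G) (k : nat) : 'M[UGA]_d :=
  \matrix_(i, j) if (blk ds i <= blk ds j)%N then piU (xU g i j k) else 0.

Definition scalU (c : F) : 'M[UGA]_d :=
  (piU ((c%:MP : FreeAlg F (XUvar G))))%:M.

Inductive in_Ud : 'M[UGA]_d -> Prop :=
  | Ud_gen g k : in_Ud (xi g k)
  | Ud_one : in_Ud 1
  | Ud_scale c M : in_Ud M -> in_Ud (scalU c * M)
  | Ud_add M N : in_Ud M -> in_Ud N -> in_Ud (M + N)
  | Ud_mul M N : in_Ud M -> in_Ud N -> in_Ud (M * N).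

Definition Phi (f : FreeAlg F (Xvar G)) : 'M[UGA]_d :=
  evalp scalU (fun v : Xvar G => xi v.1 v.2) f.

End Generic.

From Pilot Require Import Defs.
From HB Require Import structures.
From mathcomp Require Import all_boot all_algebra all_fingroup.
From mathcomp Require Import generic_quotient finmap.
From mathcomp.multinomials Require Import monalg.

Set Implicit Arguments.
Unset Strict Implicit.
Unset Printing Implicit Defensive.

Import GRing.Theory.
Local Open Scope ring_scope.

(* Phi is evaluation at the generic matrices, a ring morphism (scalars act
   centrally), so its image is the algebra they generate.  For the kernel, a
   graded substitution into UT(d_1,...,d_m;A) amounts to a graded substitution
   psi of the variables x_{ij,k}^(g) in A (the entries of the substituted
   matrices).  Since psi kills T_G(A), it induces a ring morphism
   U_G(A) -> A, and applied entrywise this morphism sends xi_k^(g) to the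
   substituted matrices.  Hence f(xi) = 0 makes f vanish on UT; conversely,
   if f is an identity of UT, every entry of f(xi) is killed by every graded
   substitution, i.e. is zero in U_G(A). *)

Lemma comm_scalar_mx_central (R : pzRingType) (n : nat) (a : R) (M : 'M[R]_n) :
  (forall b, GRing.comm a b) -> GRing.comm a%:M M.
Proof.
move=> a_central; apply/matrixP => i j; rewrite !mxE.
rewrite (bigD1 i) //= [RHS](bigD1 j) //= !big1 ?addr0.
- by rewrite !mxE !eqxx !mulr1n a_central.
- by move=> k /negbTE k_j; rewrite !mxE k_j mulr0n mulr0.
- by move=> k /negbTE k_i; rewrite !mxE eq_sym k_i mulr0n mul0r.
Qed.

Lemma commr_malgC (R : comNzRingType) (K : monomType) (c : R) (f : {malg R[K]}) :
  GRing.comm c%:MP f.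
Proof.
rewrite /GRing.comm !malgM_def fgmulUg fgmulgU; apply: eq_bigr => m _.
by rewrite mulrC mul1m mulm1.
Qed.

Section FreeAlgebraEvaluation.
Variables (F : fieldType) (V : choiceType) (S : pzRingType).

Lemma eq_evalp (s1 s2 : F -> S) (phi1 phi2 : V -> S) :
  s1 =1 s2 -> phi1 =1 phi2 -> evalp s1 phi1 =1 evalp s2 phi2.
Proof.
move=> eq_s eq_phi f; apply: eq_bigr => m _; rewrite eq_s.
by congr (_ * _); apply: eq_bigr => v _.
Qed.

Lemma rmorph_evalp (S' : pzRingType) (h : {rmorphism S -> S'})
    (s : F -> S) (phi : V -> S) (f : FreeAlg F V) :
  h (evalp s phi f) = evalp (h \o s) (h \o phi) f.
Proof.
rewrite /evalp rmorph_sum; apply: eq_bigr => m _.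
by rewrite rmorphM rmorph_prod.
Qed.

Variables (s : {rmorphism F -> S}) (phi : V -> S).
Local Notation ev := (evalp s phi).

Lemma evalp_supp_incl (D : {fset fmonom V}) (f : FreeAlg F V) :
  (msupp f `<=` D)%fset -> ev f = \sum_(m <- D) s f@_m * \prod_(v <- (m : seq V)) phi v.
Proof.
move=> supp_f; rewrite /evalp [LHS](big_fset_incl _ supp_f) // => m _ /mcoeff_outdom ->.
by rewrite rmorph0 mul0r.
Qed.

Lemma evalpU (c : F) (m : fmonom V) :
  ev << c *g m >> = s c * \prod_(v <- (m : seq V)) phi v.
Proof. by rewrite (evalp_supp_incl msuppU_le) big_seq_fset1 mcoeffUU. Qed.

Lemma evalp_pvar (v : V) : ev (pvar F v) = phi v.
Proof. by rewrite evalpU rmorph1 mul1r fmuE big_seq1. Qed.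

Lemma evalpC (c : F) : ev c%:MP = s c.
Proof. by rewrite evalpU fm1 big_nil mulr1. Qed.

Lemma evalp_is_zmod_morphism : zmod_morphism ev.
Proof.
move=> f g; pose D := (msupp f `|` msupp g)%fset.
rewrite (@evalp_supp_incl D (f - g)) ?msuppB_le // (@evalp_supp_incl D f) ?fsubsetUl //.
rewrite (@evalp_supp_incl D g) ?fsubsetUr // -sumrB.
by apply: eq_bigr => m _; rewrite mcoeffB rmorphB mulrBl.
Qed.

HB.instance Definition _ :=
  GRing.isZmodMorphism.Build (FreeAlg F V) S ev evalp_is_zmod_morphism.

Hypothesis s_phi_comm : forall c v, GRing.comm (s c) (phi v).

Lemma evalp_is_monoid_morphism : monoid_morphism ev.
Proof.
split=> [|f g]; first by rewrite -mpolyC1E evalpC rmorph1.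
rewrite malgME raddf_sum mulr_suml /=; apply: eq_bigr => m _.
rewrite raddf_sum mulr_sumr /=; apply: eq_bigr => m' _.
rewrite !evalpU rmorphM fmM big_cat /= -!mulrA; congr (_ * _).
rewrite !mulrA; congr (_ * _).
by apply: commr_prod => v _; apply: s_phi_comm.
Qed.

End FreeAlgebraEvaluation.

Section RelativelyFreeAlgebra.
Variables (F : fieldType) (G : finGroupType) (A : algType F) (Ag : G -> A -> Prop).
Local Notation U := (UGA Ag).
Local Notation XU := (FreeAlg F (XUvar G)).
Local Notation piU := (@piU F G A Ag).

Lemma piU_is_zmod_morphism : zmod_morphism piU.
Proof. exact: raddfB. Qed.

Lemma piU_is_monoid_morphism : monoid_morphism piU.
Proof. by split; [exact: pi_UG_one | exact: pi_UG_mul]. Qed.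

HB.instance Definition _ := GRing.isZmodMorphism.Build XU U piU piU_is_zmod_morphism.
HB.instance Definition _ := GRing.isMonoidMorphism.Build XU U piU piU_is_monoid_morphism.

Lemma piU_repr (u : U) : piU (repr u) = u.
Proof. exact: reprK. Qed.

Lemma piU_eq0 (r : XU) : piU r = 0 <-> TG Ag (@fst G _) r.
Proof.
have -> : (piU r = 0) <-> (piU r == piU 0) by rewrite rmorph0; split=> /eqP.
by rewrite /piU /piUG piE Quotient.equivE subr0; split=> /pboolP.
Qed.

Lemma piUC_central (c : F) (u : U) : GRing.comm (piU c%:MP) u.
Proof. by rewrite -[u]piU_repr /GRing.comm -!rmorphM commr_malgC. Qed.

HB.instance Definition _ (psi : XUvar G -> A) :=
  GRing.isMonoidMorphism.Build XU A (evalp (GRing.in_alg A) psi)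
    (evalp_is_monoid_morphism
       (fun c v => comm_alg c (psi v) : GRing.comm (GRing.in_alg A c) _)).

Record graded_subst :=
  GradedSubst { gsubst :> XUvar G -> A; gsubstP : forall v, Ag v.1 (gsubst v) }.

Variable psi : graded_subst.

Definition evalU (u : U) : A := evalp (GRing.in_alg A) psi (repr u).

Lemma evalU_piU (r : XU) : evalU (piU r) = evalp (GRing.in_alg A) psi r.
Proof.
have /pboolP r_repr : r - repr (piU r) \in TGb Ag (@fst G _).
  by rewrite Quotient.idealrBE reprK.
apply/eqP; rewrite /evalU eq_sym -subr_eq0 -rmorphB.
exact/eqP/(r_repr psi)/gsubstP.
Qed.

Lemma evalU_is_zmod_morphism : zmod_morphism evalU.
Proof.
by move=> u v; rewrite -[u]piU_repr -[v]piU_repr -rmorphB !evalU_piU rmorphB.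
Qed.

Lemma evalU_is_monoid_morphism : monoid_morphism evalU.
Proof.
split=> [|u v]; first by rewrite -(rmorph1 piU) evalU_piU rmorph1.
by rewrite -[u]piU_repr -[v]piU_repr -rmorphM !evalU_piU rmorphM.
Qed.

HB.instance Definition _ := GRing.isZmodMorphism.Build U A evalU evalU_is_zmod_morphism.
HB.instance Definition _ :=
  GRing.isMonoidMorphism.Build U A evalU evalU_is_monoid_morphism.

End RelativelyFreeAlgebra.

Section GenericMatrices.
Variables (F : fieldType) (G : finGroupType) (A : algType F)
  (Ag : G -> A -> Prop) (ds : seq nat).
Local Notation d := (sumn ds).
Local Notation U := (UGA Ag).
Local Notation piU := (@piU F G A Ag).
Local Notation scalU := (@scalU F G A Ag ds).
Local Notation xi := (@xi F G A Ag ds).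
Local Notation Phi := (@Phi F G A Ag ds).
Local Notation in_Ud := (@in_Ud F G A Ag ds).

Lemma scalU_is_zmod_morphism : zmod_morphism scalU.
Proof. by move=> a b; rewrite /Defs.scalU !raddfB. Qed.

Lemma scalU_is_monoid_morphism : monoid_morphism scalU.
Proof.
split=> [|a b]; first by rewrite /Defs.scalU mpolyC1E rmorph1.
by rewrite /Defs.scalU rmorphM /= rmorphM scalar_mxM.
Qed.

HB.instance Definition _ :=
  GRing.isZmodMorphism.Build F 'M[U]_d scalU scalU_is_zmod_morphism.
HB.instance Definition _ :=
  GRing.isMonoidMorphism.Build F 'M[U]_d scalU scalU_is_monoid_morphism.

Lemma scalU_central (c : F) (M : 'M[U]_d) : GRing.comm (scalU c) M.
Proof. by apply: comm_scalar_mx_central => u; apply: piUC_central. Qed.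

HB.instance Definition _ :=
  GRing.isZmodMorphism.Build (FreeAlg F (Xvar G)) 'M[U]_d Phi
    (evalp_is_zmod_morphism _ _).
HB.instance Definition _ :=
  GRing.isMonoidMorphism.Build (FreeAlg F (Xvar G)) 'M[U]_d Phi
    (evalp_is_monoid_morphism (fun c _ => scalU_central c _)).

Lemma Phi_in_Ud (f : FreeAlg F (Xvar G)) : in_Ud (Phi f).
Proof.
have Ud0 : in_Ud 0 by rewrite -(mul0r 1) -(rmorph0 scalU); apply/Ud_scale/Ud_one.
apply: (big_ind in_Ud Ud0 (@Ud_add _ _ _ _ _)) => m _; apply: Ud_scale.
by apply: (big_ind in_Ud (@Ud_one _ _ _ _ _) (@Ud_mul _ _ _ _ _)) => v _; apply: Ud_gen.
Qed.

Lemma in_Ud_Phi_image (M : 'M[U]_d) : in_Ud M -> exists f, Phi f = M.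
Proof.
elim=> [g k||c _ _ [f <-]|_ _ _ [f <-] _ [h <-]|_ _ _ [f <-] _ [h <-]].
- by exists (pvar F ((g, k) : Xvar G)); rewrite /Defs.Phi evalp_pvar.
- by exists 1; rewrite rmorph1.
- by exists (c%:MP * f); rewrite rmorphM /= /Defs.Phi evalpC.
- by exists (f + h); rewrite rmorphD.
- by exists (f * h); rewrite rmorphM.
Qed.

Lemma map_mx_evalU_xi (psi : graded_subst Ag) g k (i j : 'I_d) :
  map_mx (evalU psi) (xi g k) i j =
  if (blk ds i <= blk ds j)%N then psi (g, (val i, val j, k)) else 0.
Proof.
by rewrite !mxE; case: ifP => _; rewrite ?rmorph0 // evalU_piU evalp_pvar.
Qed.

Lemma map_mx_evalU_Phi (psi : graded_subst Ag) (f : FreeAlg F (Xvar G)) :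
  map_mx (evalU psi) (Phi f) =
  evalp (fun c : F => (c%:A : A)%:M) (fun v => map_mx (evalU psi) (xi v.1 v.2)) f.
Proof.
rewrite rmorph_evalp; apply: eq_evalp => [c|v] //=.
by rewrite map_scalar_mx /= evalU_piU evalpC.
Qed.

Hypothesis Ag0 : forall g, Ag g 0.

Lemma UTg_map_mx_evalU_xi (psi : graded_subst Ag) g k :
  UTg Ag g (map_mx (evalU psi) (xi g k)).
Proof.
split=> i j; rewrite map_mx_evalU_xi; first by move=> ji; rewrite leqNgt ji.
by case: ifP => _; [exact: (gsubstP psi (g, (val i, val j, k))) | exact: Ag0].
Qed.

Lemma UTg_subst_generic (phi : Xvar G -> 'M[A]_d) :
  (forall v, UTg Ag v.1 (phi v)) ->
  exists psi : graded_subst Ag, forall v, phi v = map_mx (evalU psi) (xi v.1 v.2).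
Proof.
move=> phi_graded.
pose psi (v : XUvar G) : A :=
  if insub v.2.1.1 is Some i then
    if insub v.2.1.2 is Some j then phi (v.1, v.2.2) i j else 0
  else 0.
have psi_graded v : Ag v.1 (psi v).
  case: v => g [[i j] k]; rewrite /psi /=.
  case: (insub i) => [i'|]; last exact: Ag0.
  case: (insub j) => [j'|]; last exact: Ag0.
  by case: (phi_graded (g, k)) => _; apply.
exists (GradedSubst psi_graded) => -[g k]; apply/matrixP => i j.
rewrite map_mx_evalU_xi /=; case: ifP => [_|ij_below]; first by rewrite /psi /= !valK.
by case: (phi_graded (g, k)) => -> //; rewrite ltnNge ij_below.
Qed.

Lemma Phi_eq0 (f : FreeAlg F (Xvar G)) : Phi f = 0 <-> TG_UT Ag ds f.
Proof.
split=> [Phi_f0 phi /UTg_subst_generic [psi phi_E] | f_id].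
  by rewrite (eq_evalp (frefl _) phi_E) -map_mx_evalU_Phi Phi_f0 rmorph0.
apply/matrixP => i j; rewrite [RHS]mxE -[Phi f i j]piU_repr; apply/piU_eq0.
move=> psi psi_graded; pose Psi := GradedSubst psi_graded.
change (evalU Psi (Phi f i j) = 0).
have -> : evalU Psi (Phi f i j) = map_mx (evalU Psi) (Phi f) i j by rewrite mxE.
by rewrite map_mx_evalU_Phi f_id ?mxE // => -[g k]; apply: UTg_map_mx_evalU_xi.
Qed.

End GenericMatrices.

Theorem lemma5p1 (F : fieldType) (G : finGroupType) (A : algType F)
    (Ag : G -> A -> Prop) (ds : seq nat) :
  [pchar F] =i pred0 ->
  is_Ggrading Ag ->
  is_GPI Ag ->
  (0 < size ds)%N -> all (fun di => 0 < di)%N ds ->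
  (forall f : FreeAlg F (Xvar G), @in_Ud F G A Ag ds (@Phi F G A Ag ds f)) /\
  (forall M, @in_Ud F G A Ag ds M -> exists f, @Phi F G A Ag ds f = M) /\
  (forall f : FreeAlg F (Xvar G), @Phi F G A Ag ds f = 0 <-> TG_UT Ag ds f).
Proof.
move=> _ [Ag_subspace _ _ _] _ _ _.
have Ag0 g : Ag g 0 by case: (Ag_subspace g).
split; first exact: Phi_in_Ud.
split; first exact: in_Ud_Phi_image.
exact: Phi_eq0.
Qed.
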